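(* For every integer $g\ge 0$, let $n'_g$ denote the number of gapsets of genus $g$ and depth at most $3$. Then for all $g \ge 2$, $n'_g \ge n'_{g-1}+n'_{g-2}$.
   Context: A gapset is a finite set $G \subset \mathbb{N}_+=\{1,2,3,\dots\}$ such that for all $z \in G$, whenever $z=x+y$ with $x,y\in\mathbb{N}_+$, we have $x\in G$ or $y\in G$. The multiplicity of $G$ is the least $m\ge 1$ with $m\notin G$; its conductor is $c=\max G+1$ (with $c=0$ if $G=\emptyset$); its genus is $|G|$; its depth is $\lceil c/m\rceil$. *)

From mathcomp Require Import all_boot all_order finmap.
From mathcomp Require Import classical_sets cardinality.
Set Implicit Arguments. Unset Strict Implicit. Unset Printing Implicit Defensive.

Definition gapset (G : {fset nat}) : Prop :=
  (0 \notin G) /\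
  (forall z x y, z \in G -> (0 < x)%N -> (0 < y)%N -> (x + y)%N = z -> (x \in G) || (y \in G)).

Definition conductor (G : {fset nat}) : nat :=
  if G == fset0%fset then 0 else (\max_(x <- G) x).+1.

(* multiplicity: least m >= 1 with m \notin G (searched among 1 .. max G + 1,
   which always contains a non-element) *)
Definition multiplicity (G : {fset nat}) : nat :=
  (find (fun k => k.+1 \notin G) (iota 0 (\max_(x <- G) x).+1)).+1.

Definition genus (G : {fset nat}) : nat := #|` G|%fset.

(* depth = ceil (c / m) *)
Definition depth (G : {fset nat}) : nat :=
  (conductor G + multiplicity G).-1 %/ multiplicity G.

(* n'_g : number of gapsets of genus g and depth at most 3
   (fset_set of an infinite set would be empty; the set is in fact finite) *)
Definition n' (g : nat) : nat :=
  (#|` fset_set [set G : {fset nat} | gapset G /\ genus G = g /\ depth G <= 3]|)%fset.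

From mathcomp Require Import all_boot all_order finmap.
From mathcomp Require Import classical_sets cardinality.
From mathcomp Require Import zify.

Set Implicit Arguments.
Unset Strict Implicit.
Unset Printing Implicit Defensive.

(* A gapset G of multiplicity m and depth at most 3 lies in [1, 3m).  Make m
   a gap, move the elements of G in [m, 2m) up by one and those in [2m, 3m)
   up by two, and optionally add the gap 2m + 1.  The result is again a
   gapset of depth at most 3, now of multiplicity m + 1 and of genus one,
   resp. two, larger; G and the option can be read back from it.  So the
   gapsets of genus g - 1 and those of genus g - 2 inject with disjoint
   images into those of genus g. *)

Local Open Scope fset_scope.

Lemma leq_bigmax_fset (G : {fset nat}) x : x \in G -> x <= \max_(y <- G) y.
Proof. by move=> xG; apply: (leq_bigmax_seq (P := xpredT) (F := id) x xG). Qed.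

Lemma multiplicityP (G : {fset nat}) :
  [/\ 0 < multiplicity G, multiplicity G \notin G &
      forall j, 0 < j < multiplicity G -> j \in G].
Proof.
rewrite /multiplicity; set M := \max_(y <- G) y.
set p := fun k => k.+1 \notin G.
have has_p : has p (iota 0 M.+1).
  apply/hasP; exists M; first by rewrite mem_iota add0n leqnn.
  by rewrite /p /=; apply/negP => /leq_bigmax_fset; rewrite ltnn.
have := has_p; rewrite has_find size_iota => find_lt.
split=> //.
  by have := nth_find 0 has_p; rewrite nth_iota.
move=> j /andP[j_gt0 j_lt]; have j1_lt : j.-1 < find p (iota 0 M.+1) by lia.
have := before_find 0 j1_lt; rewrite nth_iota; last lia.
by rewrite /p add0n prednK // => /negbFE.
Qed.

Lemma multiplicity_unique (G : {fset nat}) m :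
  0 < m -> m \notin G -> (forall j, 0 < j < m -> j \in G) -> multiplicity G = m.
Proof.
move=> m_gt0 mG below_m; have [k_gt0 kG below_k] := multiplicityP G.
case: (ltngtP (multiplicity G) m) => // cmp.
  by move: kG; rewrite below_m ?k_gt0.
by move: mG; rewrite below_k ?m_gt0.
Qed.

Lemma multiplicity_le_genus (G : {fset nat}) : multiplicity G <= genus G + 1.
Proof.
have [_ _ below_m] := multiplicityP G.
have sub : [fset x in iota 1 (multiplicity G).-1] `<=` G.
  by apply/fsubsetP => x; rewrite in_fset mem_iota => x_in; apply: below_m; lia.
have := fsubset_leq_card sub.
rewrite card_fseq undup_id ?iota_uniq // size_iota /genus; lia.
Qed.

Lemma mem_lt_conductor (G : {fset nat}) x : x \in G -> x < conductor G.
Proof.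
move=> xG; rewrite /conductor; case: eqP => [G0 | _]; first by move: xG; rewrite G0.
by rewrite ltnS leq_bigmax_fset.
Qed.

Lemma conductor_le (G : {fset nat}) n : (forall x, x \in G -> x <= n) -> conductor G <= n.+1.
Proof.
rewrite /conductor; case: eqP => // _ G_le.
by rewrite ltnS; apply/bigmax_leqP_seq => x xG _; apply: G_le.
Qed.

Lemma depth_le3E (G : {fset nat}) : (depth G <= 3) = (conductor G <= 3 * multiplicity G).
Proof.
have [m_gt0 _ _] := multiplicityP G.
by rewrite /depth -ltnS ltn_divLR //; apply/idP/idP; lia.
Qed.

Lemma depth_le3_mem (G : {fset nat}) x :
  depth G <= 3 -> x \in G -> x < 3 * multiplicity G.
Proof.
rewrite depth_le3E => c_le xG.
exact: leq_trans (mem_lt_conductor xG) c_le.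
Qed.

Definition stretch m x := if x < m then x else if x < 2 * m then x.+1 else x.+2.

Lemma stretchP m x :
  [\/ x < m /\ stretch m x = x, m <= x < 2 * m /\ stretch m x = x.+1
    | 2 * m <= x /\ stretch m x = x.+2].
Proof.
rewrite /stretch; case: ifP => ?; last case: ifP => ?;
  [constructor 1 | constructor 2 | constructor 3]; lia.
Qed.

Lemma stretch_inj m : injective (stretch m).
Proof. by move=> x y; case: (stretchP m x); case: (stretchP m y); lia. Qed.

Definition grow (b : bool) (G : {fset nat}) : {fset nat} :=
  let m := multiplicity G in
  m |` ((if b then [fset (2 * m).+1] else fset0) `|` stretch m @` G).

Section Grow.

Variables (b : bool) (G : {fset nat}).
Let m := multiplicity G.

Lemma mem_grow y :
  y \in grow b G = [|| y == m, b && (y == (2 * m).+1) | y \in stretch m @` G].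
Proof. by rewrite !inE; case: b; rewrite ?inE. Qed.

Lemma mem_growP y :
  y \in grow b G -> [\/ y = m, y = (2 * m).+1 | exists2 x, x \in G & y = stretch m x].
Proof.
rewrite mem_grow => /or3P[/eqP | /andP[_ /eqP] | /imfsetP[x xG ->]];
  by [constructor 1 | constructor 2 | constructor 3; exists x].
Qed.

Lemma mem_grow_stretch x : (stretch m x \in grow b G) = (x \in G).
Proof.
rewrite mem_grow mem_imfset; last exact: stretch_inj.
case: (x \in G); first by rewrite !orbT.
by rewrite orbF; apply/negP => /orP[/eqP | /andP[_ /eqP]]; case: (stretchP m x); lia.
Qed.

Lemma mem_grow_odd : ((2 * m).+1 \in grow b G) = b.
Proof.
rewrite mem_grow eqxx andbT; have -> : ((2 * m).+1 == m) = false by lia.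
case: b => //=; apply/imfsetP => -[x _]; case: (stretchP m x); lia.
Qed.

Lemma mem_grow_le_mult j : 0 < j <= m -> j \in grow b G.
Proof.
have [_ _ below_m] := multiplicityP G.
move=> j_in; case: (ltngtP j m) => [j_lt | | ->]; [|lia|].
  have <- : stretch m j = j by rewrite /stretch j_lt.
  by rewrite mem_grow_stretch below_m //; lia.
by rewrite mem_grow eqxx.
Qed.

Lemma multiplicity_grow : multiplicity (grow b G) = m.+1.
Proof.
have [m_gt0 mG _] := multiplicityP G.
apply: multiplicity_unique => // [|j j_in]; last by apply: mem_grow_le_mult; lia.
apply/negP => /mem_growP[||[x xG m1_eq]]; try lia.
have x_eq : x = m by case: (stretchP m x); lia.
by move: mG; rewrite -/m -x_eq xG.
Qed.

Lemma genus_grow : genus (grow b G) = (genus G + b + 1)%N.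
Proof.
have card_stretch : #|` stretch m @` G| = #|` G|.
  by apply/eqP/card_in_imfsetP => x y _ _; apply: stretch_inj.
have m_notin : m \notin stretch m @` G.
  by apply/imfsetP => -[x _]; case: (stretchP m x); lia.
have odd_notin : (2 * m).+1 \notin stretch m @` G.
  by apply/imfsetP => -[x _]; case: (stretchP m x); lia.
have m_neq_odd : (m == (2 * m).+1) = false by lia.
rewrite /genus /grow -/m cardfsU1; case: b => /=.
  by rewrite !inE m_neq_odd (negbTE m_notin) cardfsU1 odd_notin card_stretch /=; lia.
by rewrite fset0U m_notin card_stretch /=; lia.
Qed.

Lemma depth_grow : depth G <= 3 -> depth (grow b G) <= 3.
Proof.
move=> depth_le; rewrite depth_le3E multiplicity_grow.
apply: leq_trans (@conductor_le _ (3 * m).+2 _) _ => [x|]; last lia.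
case/mem_growP => [->|->|[y yG ->]]; try lia.
by have := depth_le3_mem depth_le yG; case: (stretchP m y); lia.
Qed.

Lemma gapset_grow : gapset G -> depth G <= 3 -> gapset (grow b G).
Proof.
move=> [G0 G_gap] depth_le; have [m_gt0 _ _] := multiplicityP G.
split.
  apply/negP => /mem_growP[||[x xG stretch_x]]; try lia.
  have x_eq : 0 = x by case: (stretchP m x); lia.
  by move: G0; rewrite x_eq xG.
move=> z x y z_in x_gt0 y_gt0 xy_z.
case: (leqP x m) => [x_le | x_gt]; first by rewrite mem_grow_le_mult // x_gt0 x_le.
case: (leqP y m) => [y_le | y_gt]; first by rewrite orbC mem_grow_le_mult // y_gt0 y_le.
(* Now z > 2m + 1, so z is the image of some w in [2m, 3m), and the
   decomposition w = (x - 1) + (y - 1) has both parts in [m, 2m). *)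
case/mem_growP: z_in => [||[w wG z_eq]]; try lia.
have w_lt := depth_le3_mem depth_le wG.
have w_eq : (x.-1 + y.-1)%N = w by case: (stretchP m w); lia.
have x_eq : stretch m x.-1 = x by case: (stretchP m x.-1); lia.
have y_eq : stretch m y.-1 = y by case: (stretchP m y.-1); lia.
have : (x.-1 \in G) || (y.-1 \in G) by apply: G_gap wG _ _ w_eq; lia.
by move=> parts_in; rewrite -x_eq -y_eq !mem_grow_stretch.
Qed.

End Grow.

Lemma grow_inj b b' G G' : grow b G = grow b' G' -> b = b' /\ G = G'.
Proof.
move=> eq_grow; have := congr1 multiplicity eq_grow.
rewrite !multiplicity_grow => /succn_inj eq_m; split.
  by rewrite -(mem_grow_odd b G) eq_grow eq_m mem_grow_odd.
by apply/fsetP => x; rewrite -(mem_grow_stretch b G x) eq_grow eq_m mem_grow_stretch.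
Qed.

Lemma card_disjoint_inj_images (T U : choiceType) (f f' : T -> U)
    (A A' : {fset T}) (B : {fset U}) :
  injective f -> injective f' -> (forall x x', f x != f' x') ->
  (forall x, x \in A -> f x \in B) -> (forall x, x \in A' -> f' x \in B) ->
  (#|` A| + #|` A'| <= #|` B|)%N.
Proof.
move=> f_inj f'_inj f_neq_f' fAB f'A'B.
have sub : f @` A `|` f' @` A' `<=` B.
  by apply/fsubsetP => y /fsetUP[] /imfsetP[x xA ->]; [apply: fAB | apply: f'A'B].
have disj : f @` A `&` f' @` A' = fset0.
  apply/fsetP => y; rewrite !inE.
  by apply/negP => /andP[/imfsetP[x _ ->] /imfsetP[x' _ /eqP]]; rewrite (negbTE (f_neq_f' x x')).
have := fsubset_leq_card sub.
by rewrite cardfsU disj cardfs0 subn0 !card_imfset.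
Qed.

Definition depth3_gapsets k :=
  [set G : {fset nat} | gapset G /\ genus G = k /\ depth G <= 3]%classic.

Lemma finite_depth3_gapsets k : finite_set (depth3_gapsets k).
Proof.
apply: (finite_subfset (fpowerset [fset x in iota 0 (3 * (k + 1))])).
move=> G [_ [genus_G depth_le]]; rewrite /= fpowersetE.
apply/fsubsetP => x xG; rewrite in_fset mem_iota /=.
have := depth_le3_mem depth_le xG; have := multiplicity_le_genus G; lia.
Qed.

Lemma mem_depth3_gapsets k G :
  G \in fset_set (depth3_gapsets k) <-> [/\ gapset G, genus G = k & depth G <= 3].
Proof.
rewrite in_fset_set ?in_setE; last exact: finite_depth3_gapsets.
by split=> [[? [? ?]] | []].
Qed.

Lemma mem_depth3_gapsets_grow (b : bool) k k' G :
  (k + b + 1)%N = k' ->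
  G \in fset_set (depth3_gapsets k) -> grow b G \in fset_set (depth3_gapsets k').
Proof.
move=> <- /mem_depth3_gapsets[gap_G genus_G depth_le]; apply/mem_depth3_gapsets.
by split; [exact: gapset_grow | rewrite genus_grow genus_G | exact: depth_grow].
Qed.

Theorem mainTheorem2 (g : nat) : 2 <= g -> n' (g - 1) + n' (g - 2) <= n' g.
Proof.
move=> g_ge2.
apply: (card_disjoint_inj_images (f := grow false) (f' := grow true)).
- by move=> G G' /grow_inj[].
- by move=> G G' /grow_inj[].
- by move=> G G'; apply/eqP => /grow_inj[].
- by move=> G; apply: mem_depth3_gapsets_grow => /=; lia.
- by move=> G; apply: mem_depth3_gapsets_grow => /=; lia.
Qed.
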